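(* Let $f:\mathbb{R}^{n\times n}\to\mathbb{R}$ be differentiable with $\|\nabla f(X)-\nabla f(Y)\|_{\mathsf F}\le L\|X-Y\|_{\mathsf F}$ for all $X,Y\in\mathcal{D}_{[0,1]^n}$, and suppose there are constants $\underline{\nu}_f\le\overline{\nu}_f$ with $\frac{\underline{\nu}_f}{2}\|Y-X\|_{\mathsf F}^2\le f(Y)-f(X)-\langle\nabla f(X),Y-X\rangle\le\frac{\overline{\nu}_f}{2}\|Y-X\|_{\mathsf F}^2$ for all $X,Y\in\mathcal{D}_n$. Let $0<p<1$ and consider \[ \min_{X\in\mathcal{D}_n}\ F_{\sigma,p,\epsilon}(X):=f(X)+\sigma\sum_{i,j=1}^n (X_{ij}+\epsilon)^p . \] (a) Let $\epsilon>0$ and let $c>1$ be a constant. If \[ \sigma>\bar\sigma_{p,\epsilon}:=\frac{c}{p}\cdot\frac{L(2+\sqrt n)+\|\nabla f(\mathbf 0)\|_{\mathsf F}}{\epsilon^{p-1}-(1/2+\epsilon)^{p-1}}, \] then every permutation matrix is a local minimizer of this problem. (b) Let $\epsilon\ge0$. If $\sigma>\sigma^*_{p,\epsilon}:=\max\{\overline{\nu}_f/\overline{\nu}_h,0\}$ with $\overline{\nu}_h=p(1-p)(1+\epsilon)^{p-2}$, then every local minimizer of this problem is a permutation matrix.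
   Context: $\mathcal{D}_n=\{X\in\mathbb{R}^{n\times n}: X\mathbf{e}=X^{\mathsf T}\mathbf{e}=\mathbf{e},\ X\ge0\}$ is the set of doubly stochastic matrices ($\mathbf e$ the all-ones vector), $\mathcal{D}_{[0,1]^n}=\{X\in\mathbb{R}^{n\times n}:0\le X_{ij}\le1\}$, $\mathbf 0$ the zero matrix, $\langle M,N\rangle=\mathrm{tr}(M^{\mathsf T}N)$, $\|\cdot\|_{\mathsf F}$ the Frobenius norm. *)

From HB Require Import structures.
From mathcomp Require Import all_boot all_order all_algebra all_fingroup.
From mathcomp Require Import all_classical all_reals all_analysis.
Set Implicit Arguments. Unset Strict Implicit. Unset Printing Implicit Defensive.
Import Order.TTheory GRing.Theory Num.Theory.
Import numFieldNormedType.Exports.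
Local Open Scope ring_scope.

Section Defs.
Variable R : realType.

Definition frob_dot n (M N : 'M[R]_n) : R := \tr (M^T *m N).
Definition frob_norm n (M : 'M[R]_n) : R := Num.sqrt (frob_dot M M).

Definition grad n (f : 'M[R]_n -> R) (X : 'M[R]_n) : 'M[R]_n :=
  \matrix_(i, j) ('D_(delta_mx i j) f X).

Definition doubly_stochastic n (X : 'M[R]_n) : Prop :=
  (forall i j, 0 <= X i j) /\
  (forall i, \sum_j X i j = 1) /\ (forall j, \sum_i X i j = 1).

Definition unit_box n (X : 'M[R]_n) : Prop := forall i j, 0 <= X i j <= 1.

Definition Fobj n (f : 'M[R]_n -> R) (sigma p eps : R) (X : 'M[R]_n) : R :=
  f X + sigma * \sum_i \sum_j powR (X i j + eps) p.

Definition local_min_DS n (F : 'M[R]_n -> R) (X : 'M[R]_n) : Prop :=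
  doubly_stochastic X /\
  exists r : R, 0 < r /\
    forall Y, doubly_stochastic Y -> frob_norm (Y - X) < r -> F X <= F Y.

End Defs.

(* (b) A doubly stochastic X that is not a permutation matrix has fractional
   entries, at least two in each row and column they occupy; counting rows,
   columns and entries gives a nonzero D with zero line sums supported on them,
   so X +- t D stay doubly stochastic for small t.  Along this segment the
   penalty is strongly concave with modulus p (1 - p) (1 + eps)^(p - 2), while f
   curves up by at most nu_hi, so F (X + t D) + F (X - t D) < 2 F X.
   (a) If Y is doubly stochastic and close to P = perm_mx s, its distance to P
   is at most its defect d = sum_i (1 - Y i (s i)).  Concavity of t^p makes the
   penalty grow by at least sigma p ((rho + eps)^(p - 1) - (1/2 + eps)^(p - 1)) d,
   which beats the first-order decrease |grad f P| d of f when rho is small. *)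

From HB Require Import structures.
From mathcomp Require Import all_boot all_order all_algebra all_fingroup.
From mathcomp Require Import all_classical all_reals all_analysis.
From mathcomp Require Import ring lra zify.
Set Implicit Arguments. Unset Strict Implicit. Unset Printing Implicit Defensive.
Import Order.TTheory GRing.Theory Num.Theory.
Import numFieldNormedType.Exports.
Local Open Scope ring_scope.

Section Frobenius.
Variables (R : realType) (n : nat).
Implicit Types A B M : 'M[R]_n.

Lemma frob_dotE A B : frob_dot A B = \sum_i \sum_j A i j * B i j.
Proof.
rewrite /frob_dot /mxtrace exchange_big; apply: eq_bigr => i _.
by rewrite !mxE; apply: eq_bigr => j _; rewrite mxE.
Qed.

Lemma frob_dotC A B : frob_dot A B = frob_dot B A.
Proof. by rewrite !frob_dotE; apply: eq_bigr => i _; apply: eq_bigr => j _; rewrite mulrC. Qed.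

Lemma frob_dotDr M A B : frob_dot M (A + B) = frob_dot M A + frob_dot M B.
Proof.
rewrite !frob_dotE -big_split; apply: eq_bigr => i _.
by rewrite -big_split; apply: eq_bigr => j _; rewrite mxE mulrDr.
Qed.

Lemma frob_dotZr M A a : frob_dot M (a *: A) = a * frob_dot M A.
Proof.
rewrite !frob_dotE mulr_sumr; apply: eq_bigr => i _.
by rewrite mulr_sumr; apply: eq_bigr => j _; rewrite mxE mulrCA.
Qed.

Lemma frob_dotDl M A B : frob_dot (A + B) M = frob_dot A M + frob_dot B M.
Proof. by rewrite frob_dotC frob_dotDr !(frob_dotC M). Qed.

Lemma frob_dotZl M A a : frob_dot (a *: A) M = a * frob_dot A M.
Proof. by rewrite frob_dotC frob_dotZr frob_dotC. Qed.

Lemma frob_dotNr A B : frob_dot A (- B) = - frob_dot A B.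
Proof. by rewrite -scaleN1r frob_dotZr mulN1r. Qed.

Lemma frob_dot_ge0 M : 0 <= frob_dot M M.
Proof.
rewrite frob_dotE; apply: sumr_ge0 => i _; apply: sumr_ge0 => j _.
by rewrite -expr2 sqr_ge0.
Qed.

Lemma frob_norm_ge0 M : 0 <= frob_norm M.
Proof. exact: sqrtr_ge0. Qed.

Lemma sqr_frob_norm M : frob_norm M ^+ 2 = frob_dot M M.
Proof. by rewrite sqr_sqrtr // frob_dot_ge0. Qed.

Lemma frob_norm_eq0 M : (frob_norm M == 0) = (M == 0).
Proof.
apply/idP/eqP => [|->]; last first.
  rewrite /frob_norm frob_dotE big1 ?sqrtr0 // => i _.
  by rewrite big1 // => j _; rewrite mxE mul0r.
rewrite sqrtr_eq0 le_eqVlt ltNge frob_dot_ge0 orbF frob_dotE => /eqP MM0.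
have sq_ge0 (x : R) : 0 <= x * x by rewrite -expr2 sqr_ge0.
have row0 i : \sum_j M i j * M i j = 0.
  by apply: (psumr_eq0P _ MM0) => // k _; apply: sumr_ge0.
apply/matrixP => i j; rewrite mxE; apply/eqP.
by rewrite -[M i j == 0]orbb -mulf_eq0 (psumr_eq0P _ (row0 i)).
Qed.

Lemma frob_normZ M a : frob_norm (a *: M) = `|a| * frob_norm M.
Proof.
rewrite /frob_norm frob_dotZl frob_dotZr mulrA -expr2 sqrtrM ?sqr_ge0 //.
by rewrite sqrtr_sqr.
Qed.

Lemma frob_normN M : frob_norm (- M) = frob_norm M.
Proof. by rewrite -scaleN1r frob_normZ normrN1 mul1r. Qed.

Lemma frob_dot_le A B : frob_dot A B <= frob_norm A * frob_norm B.
Proof.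
have [->|A_neq0] := eqVneq A 0.
  by rewrite -(scale0r 0) frob_dotZl mul0r mulr_ge0 ?frob_norm_ge0.
have [->|B_neq0] := eqVneq B 0.
  by rewrite -(scale0r 0) frob_dotZr mul0r mulr_ge0 ?frob_norm_ge0.
set a := frob_norm A; set b := frob_norm B.
have a_neq0 : a != 0 by rewrite frob_norm_eq0.
have b_neq0 : b != 0 by rewrite frob_norm_eq0.
have ab_gt0 : 0 < a * b by rewrite mulr_gt0 // lt0r ?a_neq0 ?b_neq0 frob_norm_ge0.
(* expand [0 <= |b A - a B|^2 = 2 a b (a b - <A, B>)] *)
have := frob_dot_ge0 (b *: A - a *: B).
rewrite frob_dotDl !frob_dotDr !frob_dotNr -!scaleNr !frob_dotZl !frob_dotZr.
rewrite -!sqr_frob_norm -/a -/b (frob_dotC B A) => sq_ge0.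
have : 0 <= (a * b) * (2 * (a * b - frob_dot A B)) by nra.
by rewrite pmulr_rge0 // pmulr_rge0 // subr_ge0.
Qed.

Lemma frob_dot_ge A B : - (frob_norm A * frob_norm B) <= frob_dot A B.
Proof. by have := frob_dot_le A (- B); rewrite frob_dotNr frob_normN lerNl. Qed.

Lemma frob_normD A B : frob_norm (A + B) <= frob_norm A + frob_norm B.
Proof.
rewrite -ler_sqr ?nnegrE ?addr_ge0 ?frob_norm_ge0 // !sqr_frob_norm sqrrD !sqr_frob_norm.
rewrite frob_dotDl !frob_dotDr (frob_dotC B A).
have := frob_dot_le A B; lra.
Qed.

Lemma abs_entry_le_frob_norm M i j : `|M i j| <= frob_norm M.
Proof.
rewrite -(sqrtr_sqr (M i j)) ler_sqrt ?frob_dot_ge0 // frob_dotE.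
rewrite (bigD1 i) //= (bigD1 j) //= -expr2 -addrA lerDl.
by rewrite addr_ge0 ?sumr_ge0 // => *; rewrite ?sumr_ge0 // => *; rewrite -expr2 sqr_ge0.
Qed.

End Frobenius.

Section RealPower.
Variable R : realType.
Implicit Types p q r a b h x y M : R.

Lemma le0_ger_powR r x y : r <= 0 -> 0 < x -> x <= y -> powR y r <= powR x r.
Proof.
move=> r_le0 x_gt0 xy; have y_gt0 := lt_le_trans x_gt0 xy.
rewrite -[r]opprK !(powRN _ (- r)) lef_pV2 ?posrE ?powR_gt0 //.
by rewrite (ge0_ler_powR _ _ _ xy) ?nnegrE ?oppr_ge0 ?(ltW x_gt0) ?(ltW y_gt0).
Qed.

Lemma lt0_gtr_powR r x y : r < 0 -> 0 < x -> x < y -> powR y r < powR x r.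
Proof.
move=> r_lt0 x_gt0 xy; have y_gt0 := lt_trans x_gt0 xy.
rewrite -[r]opprK !(powRN _ (- r)) ltf_pV2 ?posrE ?powR_gt0 //.
by rewrite (gt0_ltr_powR _ _ _ xy) ?nnegrE ?oppr_gt0 ?(ltW x_gt0) ?(ltW y_gt0).
Qed.

Lemma powR_MVT q a b : 0 < a -> a < b ->
  exists2 z, a < z < b & powR b q - powR a q = q * powR z (q - 1) * (b - a).
Proof.
move=> a_gt0 ab.
have deriv z : z \in `]a, b[ -> is_derive z 1 (fun x => powR x q) (q * powR z (q - 1)).
  by rewrite in_itv /= => /andP[az _]; apply: is_derive1_powR; lra.
have cont : {within `[a, b], continuous (fun x => powR x q)}%classic.
  apply: derivable_within_continuous => z; rewrite in_itv /= => /andP[az _].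
  by apply: derivable_powR; rewrite in_itv /= andbT; lra.
have [z] := MVT ab deriv cont.
by rewrite in_itv /= => zab ->; exists z.
Qed.

Lemma ge0_powR_slope q a b : 0 <= q <= 1 -> 0 < a -> a <= b ->
  q * powR b (q - 1) * (b - a) <= powR b q - powR a q <= q * powR a (q - 1) * (b - a).
Proof.
move=> /andP[q_ge0 q_le1] a_gt0; rewrite le_eqVlt => /predU1P[<-|ab].
  by rewrite !subrr mulr0 lexx.
have [z /andP[az zb] ->] := powR_MVT q a_gt0 ab.
have z_gt0 : 0 < z by lra.
have q1_le0 : q - 1 <= 0 by lra.
rewrite !ler_pM2r ?subr_gt0 //.
by rewrite !ler_wpM2l ?le0_ger_powR ?(ltW az) ?(ltW zb).
Qed.

Lemma le0_powR_slope q a b : q <= 0 -> 0 < a -> a <= b ->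
  q * powR a (q - 1) * (b - a) <= powR b q - powR a q <= q * powR b (q - 1) * (b - a).
Proof.
move=> q_le0 a_gt0; rewrite le_eqVlt => /predU1P[<-|ab].
  by rewrite !subrr mulr0 lexx.
have [z /andP[az zb] ->] := powR_MVT q a_gt0 ab.
have z_gt0 : 0 < z by lra.
have q1_le0 : q - 1 <= 0 by lra.
rewrite !ler_pM2r ?subr_gt0 //.
by rewrite !ler_wnM2l ?le0_ger_powR ?(ltW az) ?(ltW zb).
Qed.

Lemma powR_step_ge p eps rho y : 0 <= p <= 1 -> 0 < eps -> 0 <= y -> y <= rho ->
  p * powR (rho + eps) (p - 1) * y <= powR (y + eps) p - powR eps p.
Proof.
move=> p01 eps_gt0 y_ge0 y_le.
have /andP[slope _] := ge0_powR_slope p01 eps_gt0 (ler_wpDl y_ge0 (lexx eps)).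
apply: le_trans slope; rewrite addrK; apply: ler_wpM2r => //.
by apply: ler_wpM2l; [case/andP: p01 | apply: le0_ger_powR; lra].
Qed.

Lemma powR_step_le p eps y : 0 <= p <= 1 -> 0 <= eps -> 2^-1 <= y -> y <= 1 ->
  powR (1 + eps) p - powR (y + eps) p <= p * powR (2^-1 + eps) (p - 1) * (1 - y).
Proof.
move=> p01 eps_ge0 y_ge y_le1.
have /andP[_ slope] :=
  ge0_powR_slope p01 (ltac:(lra) : 0 < y + eps) (ltac:(lra) : y + eps <= 1 + eps).
apply: le_trans slope _; rewrite (_ : 1 + eps - (y + eps) = 1 - y); last by ring.
apply: ler_wpM2r; first by rewrite subr_ge0.
by apply: ler_wpM2l; [case/andP: p01 | apply: le0_ger_powR; lra].
Qed.

Lemma midpoint_second_diff_le0 (g dg : R -> R) a h : 0 <= h ->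
  (forall x, a - h <= x <= a + h -> is_derive x 1 g (dg x)) ->
  (forall x y, a - h <= x -> x <= y -> y <= a + h -> dg y <= dg x) ->
  g (a - h) + g (a + h) - 2 * g a <= 0.
Proof.
rewrite le_eqVlt => /predU1P[<-|h_gt0] g_deriv dg_noninc.
  by rewrite subr0 addr0 mulr2n mulrDl mul1r subrr.
have slope u v : a - h <= u -> u < v -> v <= a + h ->
    exists2 c, u < c < v & g v - g u = dg c * (v - u).
  move=> hu uv vh.
  have deriv x : x \in `]u, v[ -> is_derive x 1 g (dg x).
    by rewrite in_itv /= => /andP[? ?]; apply: g_deriv; lra.
  have cont : {within `[u, v], continuous g}%classic.
    apply: derivable_within_continuous => x; rewrite in_itv /= => /andP[? ?].
    by have [] := g_deriv x ltac:(lra).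
  by have [c] := MVT uv deriv cont; rewrite in_itv /=; exists c.
have [c1 /andP[c1l c1r] left_slope] := slope (a - h) a ltac:(lra) ltac:(lra) ltac:(lra).
have [c2 /andP[c2l c2r] right_slope] := slope a (a + h) ltac:(lra) ltac:(lra) ltac:(lra).
have := dg_noninc c1 c2 ltac:(lra) ltac:(lra) ltac:(lra).
have -> : g (a - h) + g (a + h) - 2 * g a = (g (a + h) - g a) - (g a - g (a - h)) by ring.
rewrite left_slope right_slope; nra.
Qed.

(* [x ^ p + mu / 2 * x ^ 2] is concave on [(0, M]] when [mu = p (1 - p) M ^ (p - 2)]. *)
Lemma powR_second_diff_le p a h M : 0 < p < 1 -> 0 < a - `|h| -> a + `|h| <= M ->
  powR (a + h) p + powR (a - h) p - 2 * powR a p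
    <= - (p * (1 - p) * powR M (p - 2)) * h ^+ 2.
Proof.
move=> /andP[p_gt0 p_lt1].
wlog h_ge0 : h / 0 <= h.
  move=> core; have [/core//|h_lt0] := leP 0 h.
  move=> ah ahM; have := core (- h) ltac:(lra).
  by rewrite normrN sqrrN opprK => /(_ ah ahM); lra.
rewrite ger0_norm // => ah_gt0 ahM.
set mu := p * (1 - p) * powR M (p - 2).
pose g x := powR x p + mu / 2 * (x * x).
pose dg x := p * powR x (p - 1) + mu * x.
have g_deriv x : a - h <= x <= a + h -> is_derive x 1 g (dg x).
  move=> /andP[hx _]; have x_gt0 : 0 < x by lra.
  apply: is_derive_eq (is_deriveD (is_derive1_powR p x_gt0)
    (is_deriveZ (mu / 2) (is_deriveM (is_derive_id x 1) (is_derive_id x 1)))) _.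
  by rewrite /dg /= !scaler1 -[(mu / 2) *: _]/(mu / 2 * (x + x)); field.
have dg_noninc x y : a - h <= x -> x <= y -> y <= a + h -> dg y <= dg x.
  move=> hx xy yh; have x_gt0 : 0 < x by lra.
  have /andP[_ slope] := le0_powR_slope (ltac:(lra) : p - 1 <= 0) x_gt0 xy.
  have yM : powR M (p - 2) <= powR y (p - 2) by apply: le0_ger_powR; lra.
  rewrite (_ : p - 1 - 1 = p - 2) in slope; last by ring.
  have := ler_wpM2l (ltW p_gt0) slope.
  have : 0 <= p * (1 - p) * (y - x) * (powR y (p - 2) - powR M (p - 2)).
    by rewrite !mulr_ge0 ?subr_ge0 //; lra.
  rewrite /dg /mu; nra.
have := @midpoint_second_diff_le0 g dg a h h_ge0 g_deriv dg_noninc.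
rewrite /g (addrC (powR (a + h) p)); lra.
Qed.

End RealPower.

Definition balanced (F : zmodType) n (D : 'M[F]_n) : Prop :=
  (forall i, \sum_j D i j = 0) /\ (forall j, \sum_i D i j = 0).

Lemma leq_double_card_imset (T U : finType) (f : T -> U) (A : {set T}) :
  (forall x, x \in A -> exists2 y, y \in A & (y != x) && (f y == f x)) ->
  (2 * #|f @: A| <= #|A|)%N.
Proof.
move=> partner; rewrite -[#|A|]sum1_card (partition_big_imset f) /=.
rewrite mulnC -sum_nat_const; apply: leq_sum => _ /imsetP[x xA ->].
have [y yA /andP[yx fyx]] := partner x xA.
by rewrite (bigD1 x) ?xA ?eqxx //= (bigD1 y) //= yA fyx yx.
Qed.

Lemma mxrank_sum_genmx_row (F : fieldType) m (I : finType) (P : pred I) (B : I -> 'rV[F]_m) :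
  (\rank (\sum_(i | P i) <<B i>>)%MS <= #|P|)%N.
Proof.
rewrite -sum1_card.
apply: (big_ind2 (fun (M : 'M[F]_m) (r : nat) => (\rank M <= r)%N)).
- by rewrite mxrank0.
- move=> M1 r1 M2 r2 le1 le2.
  exact: leq_trans (mxrank_adds_leqif M1 M2).1 (leq_add le1 le2).
- by move=> i _; rewrite genmxE rank_leq_row.
Qed.

Section Incidence.
Variables (F : fieldType) (n : nat) (S : {set 'I_n * 'I_n}).

(* The left kernel consists of the weightings of [S] with zero row and column sums. *)
Definition incidence_mx : 'M[F]_(#|S|, n + n) :=
  \matrix_(k < #|S|) row_mx (delta_mx 0 (enum_val k).1) (delta_mx 0 (enum_val k).2).

(* All rows lie in the span of the [e_i ++ e_j0] and the [0 ++ (e_j - e_j0)]. *)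
Lemma rank_incidence_mx j0 : j0 \in snd @: S ->
  (\rank incidence_mx < #|fst @: S| + #|snd @: S|)%N.
Proof.
move=> j0S; set Rw := fst @: S; set Cl := snd @: S.
pose Tr := (\sum_(i in Rw) <<row_mx (delta_mx 0 i) (delta_mx 0 j0) : 'rV[F]_(n + n)>>)%MS.
pose Tc := (\sum_(j in Cl :\ j0)
  <<row_mx 0 (delta_mx 0 j - delta_mx 0 j0) : 'rV[F]_(n + n)>>)%MS.
have sub : (incidence_mx <= Tr + Tc)%MS.
  apply/row_subP => k; rewrite rowK.
  have iR : (enum_val k).1 \in Rw by apply: imset_f; exact: enum_valP.
  have jC : (enum_val k).2 \in Cl by apply: imset_f; exact: enum_valP.
  set i := (enum_val k).1 in iR *; set j := (enum_val k).2 in jC *.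
  rewrite -[delta_mx 0 j](subrK (delta_mx 0 j0)) -[delta_mx 0 i]add0r -add_row_mx addrC.
  apply: addmx_sub.
    by apply: submx_trans (addsmxSl Tr Tc); apply: (sumsmx_sup i) => //; rewrite genmxE.
  have [->|ne] := eqVneq j j0; first by rewrite subrr row_mx0 sub0mx.
  apply: submx_trans (addsmxSr Tr Tc); apply: (sumsmx_sup j); first by rewrite !inE ne.
  by rewrite genmxE.
have rTr : (\rank Tr <= #|Rw|)%N := @mxrank_sum_genmx_row _ _ _ _ _.
have rTc : (\rank Tc <= #|Cl :\ j0|)%N := @mxrank_sum_genmx_row _ _ _ _ _.
have := leq_trans (mxrankS sub) (mxrank_adds_leqif Tr Tc).1.
by rewrite (cardsD1 j0 Cl) j0S; lia.
Qed.

Lemma balanced_mx_on p0 : p0 \in S -> (#|fst @: S| + #|snd @: S| <= #|S|)%N ->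
  exists2 D : 'M[F]_n, (D != 0) /\ balanced D & forall i j, D i j != 0 -> (i, j) \in S.
Proof.
move=> p0S card_le.
have rk : (\rank incidence_mx < #|S|)%N.
  exact: leq_trans (rank_incidence_mx (imset_f snd p0S)) card_le.
have [u uK u_neq0] : exists2 u : 'rV_#|S|, (u <= kermx incidence_mx)%MS & u != 0.
  by apply/rowV0Pn; rewrite kermx_eq0 /row_free neq_ltn rk.
have uA : u *m incidence_mx = 0 by apply/sub_kermxP.
pose D : 'M[F]_n := \matrix_(i, j) \sum_k u 0 k * (enum_val k == (i, j))%:R.
have D_at k : D (enum_val k).1 (enum_val k).2 = u 0 k.
  rewrite mxE -surjective_pairing (bigD1 k) //= eqxx mulr1 big1 ?addr0 // => l lk.
  by rewrite (inj_eq enum_val_inj) (negbTE lk) mulr0.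
have D_row i : \sum_j D i j = \sum_k u 0 k * ((enum_val k).1 == i)%:R.
  under eq_bigr do rewrite mxE.
  rewrite exchange_big; apply: eq_bigr => k _; rewrite -mulr_sumr; congr (_ * _).
  case: (enum_val k) => a b /=; rewrite (bigD1 b) //= big1 => [|j jb].
    by rewrite xpair_eqE eqxx andbT addr0.
  by rewrite xpair_eqE (eq_sym b) (negbTE jb) andbF.
have D_col j : \sum_i D i j = \sum_k u 0 k * ((enum_val k).2 == j)%:R.
  under eq_bigr do rewrite mxE.
  rewrite exchange_big; apply: eq_bigr => k _; rewrite -mulr_sumr; congr (_ * _).
  case: (enum_val k) => a b /=; rewrite (bigD1 a) //= big1 => [|i ia].
    by rewrite xpair_eqE eqxx addr0.
  by rewrite xpair_eqE (eq_sym a) (negbTE ia).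
exists D; first split.
- have [k uk] : exists k, u 0 k != 0.
    apply/existsP; move: u_neq0; apply: contraNT; rewrite negb_exists => /forallP u0.
    by apply/eqP/rowP => k; rewrite mxE; apply/eqP; rewrite -[_ == _]negbK u0.
  by apply: contraNneq uk => D0; rewrite -D_at D0 mxE.
- split=> [i|j].
    have := congr1 (fun M : 'rV_(n + n) => M 0 (lshift n i)) uA.
    rewrite /= !mxE D_row => uAi; apply: etrans uAi; apply: eq_bigr => k _.
    by rewrite mxE row_mxEl mxE eqxx eq_sym.
  have := congr1 (fun M : 'rV_(n + n) => M 0 (rshift n j)) uA.
  rewrite /= !mxE D_col => uAj; apply: etrans uAj; apply: eq_bigr => k _.
  by rewrite mxE row_mxEr mxE eqxx eq_sym.
- move=> i j; apply: contraNT => ijS; rewrite mxE big1 // => k _.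
  have [ek|] := eqVneq (enum_val k) (i, j); last by rewrite mulr0.
  by rewrite -ek enum_valP in ijS.
Qed.

End Incidence.

Lemma sum2_le_sum (R : realType) (I : finType) (F : I -> R) a b :
  a != b -> (forall x, 0 <= F x) -> F a + F b <= \sum_x F x.
Proof.
move=> ab F_ge0; rewrite (bigD1 a) //= (bigD1 b) 1?eq_sym //= addrA lerDl.
exact: sumr_ge0.
Qed.

Lemma frac_entry_partner (R : realType) (I : finType) (F : I -> R) j :
  (forall i, 0 <= F i) -> \sum_i F i = 1 -> 0 < F j < 1 ->
  exists2 k, k != j & 0 < F k < 1.
Proof.
move=> F_ge0 F_sum /andP[Fj_gt0 Fj_lt1].
have rest : \sum_(k | k != j) F k = 1 - F j by move: F_sum; rewrite (bigD1 j) //=; lra.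
have [k /andP[kj Fk_gt0]] : exists k, (k != j) && (0 < F k).
  by apply: psumr_neq0P => [k _|]; rewrite ?F_ge0 // rest; lra.
exists k => //; rewrite Fk_gt0 /=.
by have := sum2_le_sum kj F_ge0; lra.
Qed.

Section DoublyStochastic.
Variables (R : realType) (n : nat).
Implicit Types (X Y D : 'M[R]_n) (s : 'S_n).

Lemma ds_entry_bounds X i j : doubly_stochastic X -> 0 <= X i j <= 1.
Proof.
case=> X_ge0 [X_row _]; rewrite X_ge0 -(X_row i) (bigD1 j) //= lerDl.
exact: sumr_ge0.
Qed.

Lemma ds_add_balanced X D c : doubly_stochastic X -> balanced D ->
  (forall i j, 0 <= X i j + c * D i j) -> doubly_stochastic (X + c *: D).
Proof.
move=> [_ [X_row X_col]] [D_row D_col] XD_ge0; split.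
  by move=> i j; rewrite !mxE.
split=> [i|j]; under eq_bigr do rewrite !mxE.
  by rewrite big_split -mulr_sumr /= X_row D_row mulr0 addr0.
by rewrite big_split -mulr_sumr /= X_col D_col mulr0 addr0.
Qed.

Lemma perm_mxE s i j : (perm_mx s : 'M[R]_n) i j = (s i == j)%:R.
Proof. by rewrite !mxE. Qed.

Lemma row_sum_perm_mx s i : \sum_j (perm_mx s : 'M[R]_n) i j = 1.
Proof.
under eq_bigr do rewrite perm_mxE.
by rewrite (bigD1 (s i)) //= eqxx big1 ?addr0 // => j /negbTE; rewrite eq_sym => ->.
Qed.

Lemma perm_mx_ds s : doubly_stochastic (perm_mx s : 'M[R]_n).
Proof.
split; first by move=> i j; rewrite perm_mxE ler0n.
split=> [|j]; first exact: row_sum_perm_mx.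
rewrite -(row_sum_perm_mx s^-1 j) -tr_perm_mx.
by apply: eq_bigr => i _; rewrite [RHS]mxE.
Qed.

Lemma frob_norm_perm_mx s : frob_norm (perm_mx s : 'M[R]_n) = Num.sqrt n%:R.
Proof.
rewrite /frob_norm frob_dotE; congr Num.sqrt.
rewrite -[n in RHS]card_ord -sumr_const; apply: eq_bigr => i _.
rewrite -(row_sum_perm_mx s i); apply: eq_bigr => j _.
by rewrite perm_mxE; case: eqP; rewrite ?mulr1 ?mulr0.
Qed.

Lemma ds01_is_perm_mx X : doubly_stochastic X ->
  (forall i j, ~~ (0 < X i j < 1)) -> is_perm_mx X.
Proof.
move=> dsX X01; have [X_ge0 [X_row X_col]] := dsX.
have X_eq1 i j : 0 < X i j -> X i j = 1.
  by move=> Xij; have := X01 i j; have := ds_entry_bounds i j dsX; rewrite Xij /=; lra.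
have /fin_all_exists[f Xf] : forall i, exists j, X i j = 1.
  move=> i; have [j /andP[_ /X_eq1]] : exists j, true && (0 < X i j).
    by apply: psumr_neq0P => [j _|]; [exact: X_ge0 | rewrite X_row; exact/eqP/oner_neq0].
  by exists j.
have X_off i j : j != f i -> X i j = 0.
  move=> jf; have := sum2_le_sum jf (X_ge0 i); rewrite X_row Xf.
  by have := X_ge0 i j; lra.
have f_inj : injective f.
  move=> i1 i2 f12; apply/eqP; apply: contraT => i12.
  by have := sum2_le_sum i12 (X_ge0^~ (f i1)); rewrite X_col {2}f12 !Xf; lra.
apply/is_perm_mxP; exists (perm f_inj); apply/matrixP => i j.
rewrite perm_mxE permE; have [<-|jf] := eqVneq (f i) j; first exact: Xf.
by rewrite X_off // eq_sym.
Qed.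

Lemma not_perm_mx_balanced_dir X : doubly_stochastic X -> ~~ is_perm_mx X ->
  exists2 D : 'M[R]_n, (D != 0) /\ balanced D & forall i j, D i j != 0 -> 0 < X i j < 1.
Proof.
move=> dsX notperm; have [X_ge0 [X_row X_col]] := dsX.
pose S := [set p : 'I_n * 'I_n | 0 < X p.1 p.2 < 1].
have [[i0 j0] p0S] : exists p, p \in S.
  apply/existsP; apply: contraNT notperm; rewrite negb_exists => /forallP noS.
  by apply: ds01_is_perm_mx => // i j; have := noS (i, j); rewrite inE.
have half_rows : (2 * #|fst @: S| <= #|S|)%N.
  apply: leq_double_card_imset => -[i j]; rewrite inE /= => Xij.
  have [k kj Xik] := frac_entry_partner (X_ge0 i) (X_row i) Xij.
  by exists (i, k); rewrite ?inE //= eqxx andbT; apply: contraNneq kj => -[->].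
have half_cols : (2 * #|snd @: S| <= #|S|)%N.
  apply: leq_double_card_imset => -[i j]; rewrite inE /= => Xij.
  have [k ki Xkj] := frac_entry_partner (X_ge0^~ j) (X_col j) Xij.
  by exists (k, j); rewrite ?inE //= eqxx andbT; apply: contraNneq ki => -[->].
have card_le : (#|fst @: S| + #|snd @: S| <= #|S|)%N by lia.
have [D D_prop D_supp] := balanced_mx_on R p0S card_le.
by exists D => // i j /D_supp; rewrite inE.
Qed.

End DoublyStochastic.

Lemma exists_pos_lower_bound (R : realType) (I : finType) (w : I -> R) :
  (forall i, 0 < w i) -> exists2 e, 0 < e & forall i, e <= w i.
Proof.
move=> w_gt0; exists (\big[Num.min/1]_i w i); last by move=> i; exact: bigmin_le.
by apply/bigmin_gtP; split=> // i _; exact: w_gt0.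
Qed.

Section Penalty.
Variables (R : realType) (n : nat).
Implicit Types (X Y V D : 'M[R]_n) (p eps : R).

Definition penalty p eps X : R := \sum_i \sum_j powR (X i j + eps) p.

Lemma FobjE (f : 'M[R]_n -> R) sigma p eps X :
  Fobj f sigma p eps X = f X + sigma * penalty p eps X.
Proof. by []. Qed.

Lemma penalty_second_diff p eps X V : 0 < p < 1 -> 0 <= eps ->
  (forall i j, V i j != 0 -> `|V i j| < X i j /\ X i j + `|V i j| <= 1) ->
  penalty p eps (X + V) + penalty p eps (X - V) - 2 * penalty p eps X
    <= - (p * (1 - p) * powR (1 + eps) (p - 2)) * frob_norm V ^+ 2.
Proof.
move=> p01 eps_ge0 V_small.
rewrite sqr_frob_norm frob_dotE /penalty [2 * _]mulr_sumr [leRHS]mulr_sumr.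
rewrite -big_split -sumrB /=; apply: ler_sum => i _.
rewrite [2 * _]mulr_sumr [leRHS]mulr_sumr -big_split -sumrB /=.
apply: ler_sum => j _; rewrite !mxE -expr2.
have [->|Vij] := eqVneq (V i j) 0.
  by rewrite oppr0 !addr0 expr0n /= mulr0 mulr2n mulrDl mul1r subrr.
have [VX XV1] := V_small i j Vij.
rewrite (_ : X i j + V i j + eps = X i j + eps + V i j); last by ring.
rewrite (_ : X i j - V i j + eps = X i j + eps - V i j); last by ring.
by apply: powR_second_diff_le; lra.
Qed.

Lemma quad_upper_second_diff (f : 'M[R]_n -> R) nu X V :
  (forall X Y, doubly_stochastic X -> doubly_stochastic Y ->
     f Y - f X - frob_dot (grad f X) (Y - X) <= nu / 2 * frob_norm (Y - X) ^+ 2) ->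
  doubly_stochastic X -> doubly_stochastic (X + V) -> doubly_stochastic (X - V) ->
  f (X + V) + f (X - V) - 2 * f X <= nu * frob_norm V ^+ 2.
Proof.
move=> f_upper dsX dsXV dsXmV.
have := f_upper X _ dsX dsXV; have := f_upper X _ dsX dsXmV.
rewrite (addrC (X + V)) (addrC (X - V)) !addKr frob_dotNr frob_normN; lra.
Qed.

Lemma balanced_small_step X D : doubly_stochastic X ->
  (forall i j, D i j != 0 -> 0 < X i j < 1) ->
  exists2 t0, 0 < t0 &
    forall i j, D i j != 0 -> t0 * `|D i j| < X i j /\ X i j + t0 * `|D i j| <= 1.
Proof.
move=> dsX D_frac.
pose w (q : 'I_n * 'I_n) :=
  if D q.1 q.2 == 0 then 1 else Num.min (X q.1 q.2) (1 - X q.1 q.2) / (2 * `|D q.1 q.2|).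
have [t0 t0_gt0 t0_le] : exists2 t0, 0 < t0 & forall q, t0 <= w q.
  apply: exists_pos_lower_bound => -[i j]; rewrite /w /=; case: ifPn => // Dij.
  have /andP[X_gt0 X_lt1] := D_frac i j Dij.
  by rewrite divr_gt0 ?mulr_gt0 ?normr_gt0 // lt_min subr_gt0 X_gt0.
exists t0 => // i j Dij; have := t0_le (i, j); rewrite /w /= (negbTE Dij).
have twoD_gt0 : 0 < 2 * `|D i j| by rewrite mulr_gt0 ?normr_gt0.
rewrite ler_pdivlMr // mulrCA => t0D; have := D_frac i j Dij.
have : Num.min (X i j) (1 - X i j) <= X i j by rewrite ge_min lexx.
have : Num.min (X i j) (1 - X i j) <= 1 - X i j by rewrite ge_min lexx orbT.
lra.
Qed.

End Penalty.

Lemma local_min_is_perm_mx (R : realType) n (f : 'M[R]_n -> R) (nu p eps sigma : R)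
    (X : 'M[R]_n) :
  (forall X Y, doubly_stochastic X -> doubly_stochastic Y ->
     f Y - f X - frob_dot (grad f X) (Y - X) <= nu / 2 * frob_norm (Y - X) ^+ 2) ->
  0 < p < 1 -> 0 <= eps -> 0 <= sigma ->
  nu < sigma * (p * (1 - p) * powR (1 + eps) (p - 2)) ->
  local_min_DS (Fobj f sigma p eps) X -> is_perm_mx X.
Proof.
move=> f_upper p01 eps_ge0 sigma_ge0 nu_lt [dsX [r [r_gt0 X_min]]].
apply: contraT => notperm.
have [D [D_neq0 balD] D_frac] := not_perm_mx_balanced_dir dsX notperm.
have [t0 t0_gt0 t0_small] := balanced_small_step dsX D_frac.
have nD_gt0 : 0 < frob_norm D by rewrite lt0r frob_norm_eq0 D_neq0 frob_norm_ge0.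
pose t := Num.min t0 (r / (2 * frob_norm D)).
have t_gt0 : 0 < t by rewrite lt_min t0_gt0 divr_gt0 ?mulr_gt0.
have tD_lt : t * frob_norm D < r.
  have : t <= r / (2 * frob_norm D) by rewrite ge_min lexx orbT.
  by rewrite ler_pdivlMr ?mulr_gt0 //; nra.
have step_small c : `|c| <= t -> forall i j, c * D i j != 0 ->
    `|c * D i j| < X i j /\ X i j + `|c * D i j| <= 1.
  move=> ct i j; rewrite mulf_eq0 negb_or => /andP[_ Dij].
  have : `|c * D i j| <= t0 * `|D i j|.
    by rewrite normrM ler_wpM2r // (le_trans ct) // ge_min lexx.
  by have := t0_small i j Dij; lra.
have step_ok c : `|c| <= t -> doubly_stochastic (X + c *: D) /\
    Fobj f sigma p eps X <= Fobj f sigma p eps (X + c *: D).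
  move=> ct; have dsXc : doubly_stochastic (X + c *: D).
    apply: ds_add_balanced => // i j; have [->|cD] := eqVneq (c * D i j) 0.
      by rewrite addr0; case: dsX.
    have := ler_norm (- (c * D i j)); rewrite normrN.
    by have [] := step_small c ct i j cD; lra.
  split=> //; apply: X_min => //.
  rewrite (addrC X) addrK frob_normZ; apply: le_lt_trans tD_lt.
  by rewrite ler_wpM2r ?frob_norm_ge0.
have t_norm : `|t| = t by rewrite ger0_norm ?(ltW t_gt0).
have [dsXp FXp] := step_ok t ltac:(by rewrite t_norm).
have [dsXm FXm] := step_ok (- t) ltac:(by rewrite normrN t_norm).
rewrite scaleNr in dsXm FXm.
have f_sd := quad_upper_second_diff f_upper dsX dsXp dsXm.
have V_small : forall i j, (t *: D) i j != 0 ->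
    `|(t *: D) i j| < X i j /\ X i j + `|(t *: D) i j| <= 1.
  by move=> i j; rewrite mxE; apply: step_small; rewrite t_norm.
have pen_sd := penalty_second_diff p01 eps_ge0 V_small.
have V_gt0 : 0 < frob_norm (t *: D) ^+ 2.
  by rewrite exprn_gt0 // frob_normZ mulr_gt0 ?normr_gt0 ?gt_eqF.
move: FXp FXm; rewrite !FobjE => FXp FXm.
have := ler_wpM2l sigma_ge0 pen_sd.
have := mulr_gt0 (ltac:(lra) : 0 < sigma * (p * (1 - p) * powR (1 + eps) (p - 2)) - nu) V_gt0.
lra.
Qed.

Section PermDefect.
Variables (R : realType) (n : nat) (s : 'S_n).
Implicit Types (Y : 'M[R]_n).
Local Notation P := (perm_mx s : 'M[R]_n).

Definition perm_defect Y : R := \sum_i (1 - Y i (s i)).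

Lemma perm_defect_ge0 Y : doubly_stochastic Y -> 0 <= perm_defect Y.
Proof.
move=> dsY; apply: sumr_ge0 => i _.
by rewrite subr_ge0; case/andP: (ds_entry_bounds i (s i) dsY).
Qed.

Lemma perm_defect_le Y (rho : R) : doubly_stochastic Y ->
  (forall i j, `|(Y - P) i j| < rho) -> perm_defect Y <= n%:R * rho.
Proof.
move=> dsY close; rewrite /perm_defect mulr_natl -[n in rho *+ n]card_ord -sumr_const.
apply: ler_sum => i _.
have := close i (s i); rewrite !mxE eqxx /= ler0_norm; last first.
  by rewrite subr_le0; case/andP: (ds_entry_bounds i (s i) dsY).
by move=> /ltW; rewrite opprB.
Qed.

(* Off the support of [P], [Y i j] is bounded both by the defect of row [i]
   and by the defect of the row [s^-1 j] sharing column [j] with it. *)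
Lemma frob_norm_sub_perm_mx Y : doubly_stochastic Y ->
  frob_norm (Y - P) <= perm_defect Y.
Proof.
move=> dsY; have [Y_ge0 [Y_row Y_col]] := dsY.
pose a i := 1 - Y i (s i).
have row_le i j : j != s i -> Y i j <= a i.
  move=> js; have := sum2_le_sum js (Y_ge0 i); rewrite Y_row /a; lra.
have col_le i j : j != s i -> Y i j <= a (s^-1 j)%g.
  move=> js; have ik : i != (s^-1 j)%g by apply: contraNneq js => ->; rewrite permKV.
  by have := sum2_le_sum ik (Y_ge0^~ j); rewrite Y_col /a permKV; lra.
rewrite -(ger0_norm (perm_defect_ge0 dsY)) -sqrtr_sqr ler_sqrt ?sqr_ge0 //.
rewrite frob_dotE /perm_defect -/(\sum_i a i) expr2 mulr_suml.
apply: ler_sum => i _; rewrite mulr_sumr [leRHS](reindex_inj (@perm_inj _ s^-1)) /=.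
apply: ler_sum => j _; rewrite (_ : (Y - P) i j = Y i j - (s i == j)%:R); last by rewrite !mxE.
have [<-|js] := eqVneq (s i) j; first by rewrite permK /a -mulrNN !opprB.
by rewrite subr0 ler_pM ?row_le ?col_le // eq_sym.
Qed.

Lemma penalty_perm_growth Y p eps rho : 0 < p < 1 -> 0 < eps -> rho <= 2^-1 ->
  doubly_stochastic Y -> (forall i j, `|(Y - P) i j| < rho) ->
  p * (powR (rho + eps) (p - 1) - powR (2^-1 + eps) (p - 1)) * perm_defect Y
    <= penalty p eps Y - penalty p eps P.
Proof.
move=> /andP[p_gt0 p_lt1] eps_gt0 rho_le dsY close; have [Y_ge0 [Y_row _]] := dsY.
have p01 : 0 <= p <= 1 by rewrite !ltW.
rewrite /penalty /perm_defect mulr_sumr -sumrB; apply: ler_sum => i _.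
rewrite -sumrB (bigD1 (s i)) //= perm_mxE eqxx.
have off : \sum_(j | j != s i) (powR (Y i j + eps) p - powR (P i j + eps) p)
    >= p * powR (rho + eps) (p - 1) * (1 - Y i (s i)).
  have <- : \sum_(j | j != s i) Y i j = 1 - Y i (s i).
    by move: (Y_row i); rewrite (bigD1 (s i)) //=; lra.
  rewrite mulr_sumr; apply: ler_sum => j js.
  rewrite perm_mxE eq_sym (negbTE js) add0r.
  have := close i j; rewrite !mxE eq_sym (negbTE js) subr0 ger0_norm //.
  by move=> /ltW; apply: powR_step_ge.
have diag : powR (1 + eps) p - powR (Y i (s i) + eps) p
    <= p * powR (2^-1 + eps) (p - 1) * (1 - Y i (s i)).
  have := close i (s i); rewrite !mxE eqxx /=.
  have /andP[_ Y_le1] := ds_entry_bounds i (s i) dsY.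
  rewrite ler0_norm ?subr_le0 // => Y_close.
  by apply: powR_step_le => //; lra.
lra.
Qed.

Lemma quad_lower_perm_growth (f : 'M[R]_n -> R) nu G rho Y :
  (forall X Y, doubly_stochastic X -> doubly_stochastic Y ->
     nu / 2 * frob_norm (Y - X) ^+ 2 <= f Y - f X - frob_dot (grad f X) (Y - X)) ->
  frob_norm (grad f P) <= G -> doubly_stochastic Y ->
  (forall i j, `|(Y - P) i j| < rho) ->
  - (G * perm_defect Y) + Num.min nu 0 / 2 * (n%:R * rho) * perm_defect Y <= f Y - f P.
Proof.
move=> f_lower gradP_le dsY close.
have d_ge0 := perm_defect_ge0 dsY; have d_le := perm_defect_le dsY close.
have nD_le := frob_norm_sub_perm_mx dsY; have nD_ge0 := frob_norm_ge0 (Y - P).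
have := f_lower _ _ (perm_mx_ds R s) dsY.
have := frob_dot_ge (grad f P) (Y - P).
have : frob_norm (grad f P) * frob_norm (Y - P) <= G * perm_defect Y.
  by rewrite ler_pM ?frob_norm_ge0.
have m_le : Num.min nu 0 <= nu by rewrite ge_min lexx.
have m_le0 : Num.min nu 0 <= 0 by rewrite ge_min lexx orbT.
have nD_sq : frob_norm (Y - P) ^+ 2 <= perm_defect Y * (n%:R * rho).
  by rewrite expr2 (le_trans (ler_pM _ _ nD_le nD_le)) // ler_wpM2l.
set m := Num.min nu 0.
have : 0 <= (nu - m) * frob_norm (Y - P) ^+ 2 by rewrite mulr_ge0 ?sqr_ge0 ?subr_ge0.
have : 0 <= - m * (perm_defect Y * (n%:R * rho) - frob_norm (Y - P) ^+ 2).
  by rewrite mulr_ge0 ?oppr_ge0 ?subr_ge0.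
lra.
Qed.

End PermDefect.

Lemma perm_mx_local_min (R : realType) n (f : 'M[R]_n -> R) (nu p eps sigma G : R)
    (s : 'S_n) :
  (forall X Y, doubly_stochastic X -> doubly_stochastic Y ->
     nu / 2 * frob_norm (Y - X) ^+ 2 <= f Y - f X - frob_dot (grad f X) (Y - X)) ->
  0 < p < 1 -> 0 < eps -> frob_norm (grad f (perm_mx s)) <= G ->
  G < sigma * p * (powR eps (p - 1) - powR (2^-1 + eps) (p - 1)) ->
  local_min_DS (Fobj f sigma p eps) (perm_mx s).
Proof.
move=> f_lower p01 eps_gt0 gradP_le G_lt; have /andP[p_gt0 p_lt1] := p01.
set P := perm_mx s; set E := powR eps (p - 1); set Eh := powR (2^-1 + eps) (p - 1).
have Eh_lt : Eh < E by apply: lt0_gtr_powR; lra.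
have sigma_gt0 : 0 < sigma.
  have : 0 < sigma * (p * (E - Eh)).
    by rewrite mulrA (le_lt_trans _ G_lt) // (le_trans _ gradP_le) ?frob_norm_ge0.
  by rewrite pmulr_lgt0 // mulr_gt0 // subr_gt0.
(* [Q] bounds the slope of [t ^ (p - 1)] on [[eps, +oo)]: the penalty gain rate
   at radius [rho] is at least [sigma p (E - Q rho - Eh)] and, with the curvature
   loss [m n rho / 2] of [f], the margin [g] absorbs the total loss [rho C]. *)
set m := Num.min nu 0; set Q := (1 - p) * powR eps (p - 2).
set C := sigma * p * Q - m * n%:R / 2; set g := sigma * p * (E - Eh) - G.
have C_ge0 : 0 <= C.
  have : 0 <= sigma * p * Q by rewrite !mulr_ge0 ?powR_ge0 ?ltW //; lra.
  have : m * n%:R <= 0 by rewrite mulr_le0_ge0 // ge_min lexx orbT.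
  rewrite /C; lra.
have g_gt0 : 0 < g by rewrite subr_gt0.
pose rho := Num.min 2^-1 (g / (C + 1)).
have rho_gt0 : 0 < rho by rewrite lt_min invr_gt0 ltr0Sn divr_gt0 //; lra.
have rho_le : rho <= 2^-1 by rewrite ge_min lexx.
have rhoC : rho * C <= g.
  have : rho * (C + 1) <= g by rewrite -ler_pdivlMr ?ge_min ?lexx ?orbT //; lra.
  nra.
split; first exact: perm_mx_ds.
exists rho; split => // Y dsY YP_lt.
have close i j : `|(Y - P) i j| < rho := le_lt_trans (abs_entry_le_frob_norm _ i j) YP_lt.
have f_growth := quad_lower_perm_growth f_lower gradP_le dsY close.
have pen_growth := penalty_perm_growth p01 eps_gt0 rho_le dsY close.
have E_rho : E - Q * rho <= powR (rho + eps) (p - 1).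
  have /andP[slope _] := le0_powR_slope (ltac:(lra) : p - 1 <= 0) eps_gt0
    (ltac:(lra) : eps <= rho + eps).
  by move: slope; rewrite (_ : p - 1 - 1 = p - 2) ?addrK -/E /Q; [lra | ring].
have d_ge0 := perm_defect_ge0 s dsY.
have pen_gain := ler_wpM2l (ltW sigma_gt0) pen_growth.
have E_gain : sigma * p * perm_defect s Y * (E - Q * rho)
    <= sigma * p * perm_defect s Y * powR (rho + eps) (p - 1).
  by rewrite ler_wpM2l // !mulr_ge0 // ltW.
have margin : 0 <= perm_defect s Y * (g - rho * C) by rewrite mulr_ge0 // subr_ge0.
rewrite !FobjE; move: f_growth pen_gain E_gain margin.
rewrite /g /C /Q /m /E /Eh; lra.
Qed.

Lemma local_min_DS_dim0 (R : realType) n (F : 'M[R]_n -> R) (X : 'M[R]_n) :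
  n = 0%N -> doubly_stochastic X -> local_min_DS F X.
Proof.
move=> n0 dsX; split=> //; exists 1; split=> // Y _ _.
by have -> : Y = X by apply/matrixP => -[i i_lt]; exfalso; rewrite n0 in i_lt.
Qed.

Lemma perm_mx_local_min_lipschitz (R : realType) n (f : 'M[R]_n -> R)
    (L nu p eps c sigma : R) (s : 'S_n) :
  (forall X Y, doubly_stochastic X -> doubly_stochastic Y ->
     nu / 2 * frob_norm (Y - X) ^+ 2 <= f Y - f X - frob_dot (grad f X) (Y - X)) ->
  (0 < n)%N -> frob_norm (grad f (perm_mx s) - grad f 0) <= L * Num.sqrt n%:R ->
  0 < p < 1 -> 0 < eps -> 1 < c ->
  sigma > c / p * ((L * (2 + Num.sqrt n%:R) + frob_norm (grad f 0))
                   / (powR eps (p - 1) - powR (2^-1 + eps) (p - 1))) ->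
  local_min_DS (Fobj f sigma p eps) (perm_mx s).
Proof.
move=> f_lower n_gt0 lip p01 eps_gt0 c_gt1; have /andP[p_gt0 p_lt1] := p01.
set P := perm_mx s; set G0 := frob_norm (grad f 0).
set Delta := powR eps (p - 1) - powR (2^-1 + eps) (p - 1).
set K := L * (2 + Num.sqrt n%:R) + G0 => sigma_gt.
have L_ge0 : 0 <= L.
  by have := le_trans (frob_norm_ge0 _) lip; rewrite pmulr_lge0 // sqrtr_gt0 ltr0n.
apply: (perm_mx_local_min (G := L * Num.sqrt n%:R + G0) f_lower) => //.
  by rewrite -[grad f P](subrK (grad f 0)) (le_trans (frob_normD _ _)) // lerD2r.
have Delta_gt0 : 0 < Delta by rewrite subr_gt0 lt0_gtr_powR //; lra.
have cK_lt : c * K < sigma * (p * Delta).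
  rewrite (_ : c * K = c / p * (K / Delta) * (p * Delta)); last by field; rewrite !gt_eqF.
  by rewrite ltr_pM2r ?mulr_gt0.
have K_ge0 : 0 <= K by rewrite addr_ge0 ?frob_norm_ge0 // mulr_ge0 // addr_ge0 ?sqrtr_ge0.
have : 0 <= (c - 1) * K by rewrite mulr_ge0 // subr_ge0 ltW.
have : 0 <= L * 2 by rewrite mulr_ge0.
rewrite /K /Delta mulrA in cK_lt *; lra.
Qed.

Theorem theorem3p5 (R : realType) (n : nat) (f : 'M[R]_n -> R)
  (L nu_lo nu_hi p : R) :
  (forall X : 'M[R]_n, differentiable f X) ->
  (forall X Y : 'M[R]_n, unit_box X -> unit_box Y ->
     frob_norm (grad f X - grad f Y) <= L * frob_norm (X - Y)) ->
  nu_lo <= nu_hi ->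
  (forall X Y : 'M[R]_n, doubly_stochastic X -> doubly_stochastic Y ->
     nu_lo / 2 * frob_norm (Y - X) ^+ 2
       <= f Y - f X - frob_dot (grad f X) (Y - X) /\
     f Y - f X - frob_dot (grad f X) (Y - X)
       <= nu_hi / 2 * frob_norm (Y - X) ^+ 2) ->
  0 < p < 1 ->
  (* (a) *)
  (forall eps c sigma : R, 0 < eps -> 1 < c ->
     sigma > c / p * ((L * (2 + Num.sqrt n%:R) + frob_norm (grad f 0))
                      / (powR eps (p - 1) - powR (2^-1 + eps) (p - 1))) ->
     forall s : 'S_n, local_min_DS (Fobj f sigma p eps) (perm_mx s)) /\
  (* (b) *)
  (forall eps sigma : R, 0 <= eps ->
     sigma > Num.max (nu_hi / (p * (1 - p) * powR (1 + eps) (p - 2))) 0 ->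
     forall X : 'M[R]_n, local_min_DS (Fobj f sigma p eps) X ->
       is_perm_mx X).
Proof.
move=> _ f_lip _ f_quad p01; have /andP[p_gt0 p_lt1] := p01.
have f_lower X Y dsX dsY := (f_quad X Y dsX dsY).1.
have f_upper X Y dsX dsY := (f_quad X Y dsX dsY).2.
split=> [eps c sigma eps_gt0 c_gt1 sigma_gt s | eps sigma eps_ge0 sigma_gt X].
  have dsP := perm_mx_ds R s.
  have [n0|n_gt0] := posnP n; first exact: local_min_DS_dim0 n0 dsP.
  apply: perm_mx_local_min_lipschitz f_lower n_gt0 _ p01 eps_gt0 c_gt1 sigma_gt.
  have zero_box : unit_box (0 : 'M[R]_n) by move=> i j; rewrite mxE lexx ler01.
  have P_box : unit_box (perm_mx s : 'M[R]_n) by move=> i j; exact: ds_entry_bounds dsP.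
  by have := f_lip _ 0 P_box zero_box; rewrite subr0 frob_norm_perm_mx.
move: sigma_gt; rewrite gt_max => /andP[nu_lt sigma_gt0].
have nu_h_gt0 : 0 < p * (1 - p) * powR (1 + eps) (p - 2).
  by rewrite !mulr_gt0 ?subr_gt0 ?powR_gt0 //; lra.
apply: (local_min_is_perm_mx (nu := nu_hi) f_upper) => //; first exact: ltW.
by rewrite -ltr_pdivrMr.
Qed.
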